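(* Let $\omega\in S_n$. The poset $M_\omega$ contains a parallelogram-pattern poset if and only if $\omega$ contains the pattern $3412$ or the pattern $3421$.
   Context: Permutations $\omega\in S_n$ are written in one-line notation. Let ${\rm Inv}(\omega)=\{(i,j): 1\le i<j\le n,\ \omega(i)>\omega(j)\}$, $c_i(\omega)=\#\{j: i<j\le n,\ \omega(i)>\omega(j)\}$, and for $i<j$, $c_{i,j}(\omega)=\#\{k: i<k<j,\ \omega(i)>\omega(k)\}$; $[m]=\{1,\dots,m\}$. For $i$ with $c_i(\omega)>0$ and $x\in[c_i(\omega)]$, $m_{i,x}(\omega)\in\mathbb{N}^n$ has $j$-th coordinate $0$ if $j<i$; $x$ if $j=i$; $0$ if $j>i$ and $(i,j)\in{\rm Inv}(\omega)$; $\max\{0,x-c_{i,j}(\omega)\}$ if $j>i$ and $(i,j)\notin{\rm Inv}(\omega)$. $M_\omega$ is the set of all such $m_{i,x}(\omega)$, ordered by the product order on $\mathbb{N}^n$. For $1\le i<j\le n$, $b<a$ in $[c_i(\omega)]$ and $c<d$ in $[c_j(\omega)]$ with $a+c=b+d$, the set $\{m_{i,a}(\omega),m_{i,b}(\omega),m_{j,c}(\omega),m_{j,d}(\omega)\}$ is a parallelogram-pattern poset if $m_{i,a}(\omega)>m_{j,d}(\omega)$, $m_{i,b}(\omega)>m_{j,c}(\omega)$, and $m_{i,b}(\omega)$, $m_{j,d}(\omega)$ are incomparable. $\omega$ contains the pattern $3412$ (resp. $3421$) if there exist $i<j<k<l$ with $\omega(k)<\omega(l)<\omega(i)<\omega(j)$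 (resp. $\omega(l)<\omega(k)<\omega(i)<\omega(j)$). *)

(* Positions 1..n of the paper are represented by 'I_n (0-based);
   all notions below depend only on the relative order of positions/values. *)
From mathcomp Require Import all_boot all_fingroup.
Set Implicit Arguments. Unset Strict Implicit. Unset Printing Implicit Defensive.

Section Defs.
Variable n : nat.
Implicit Types (w : 'S_n) (i j k : 'I_n).

Definition inv_pair w i j : bool := (i < j) && (w j < w i).

Definition c w i : nat := #|[set j : 'I_n | (i < j) && (w j < w i)]|.

Definition cij w i j : nat := #|[set k : 'I_n | [&& i < k, k < j & w k < w i]]|.

(* m_{i,x}(w) in N^n; truncated subtraction x - c_{i,j} = max{0, x - c_{i,j}} *)
Definition mvec w i (x : nat) : {ffun 'I_n -> nat} :=
  [ffun j : 'I_n =>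
     if j < i then 0
     else if j == i then x
     else if inv_pair w i j then 0
     else x - cij w i j].

Definition vle (u v : {ffun 'I_n -> nat}) : bool := [forall j, u j <= v j].
Definition vlt (u v : {ffun 'I_n -> nat}) : bool := (u != v) && vle u v.
Definition incomparable (u v : {ffun 'I_n -> nat}) : bool := ~~ vle u v && ~~ vle v u.

Definition has_parallelogram w : Prop :=
  exists (i j : 'I_n) (a b cc d : nat),
    [/\ i < j,
        0 < b /\ b < a /\ a <= c w i,
        0 < cc /\ cc < d /\ d <= c w j,
        a + cc = b + d &
        [/\ vlt (mvec w j d) (mvec w i a),
            vlt (mvec w j cc) (mvec w i b) &
            incomparable (mvec w i b) (mvec w j d)]].

Definition contains3412 w : Prop :=
  exists i j k l : 'I_n, [/\ i < j, j < k, k < l & [/\ w k < w l, w l < w i & w i < w j]].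

Definition contains3421 w : Prop :=
  exists i j k l : 'I_n, [/\ i < j, j < k, k < l & [/\ w l < w k, w k < w i & w i < w j]].

End Defs.

From Pilot Require Import Defs.
From mathcomp Require Import all_boot all_fingroup.
From mathcomp Require Import zify.

Set Implicit Arguments.
Unset Strict Implicit.
Unset Printing Implicit Defensive.

(* The whole argument rests on one comparison criterion: for
   positions i < j and d > 0,
       m_{j,d} <= m_{i,x}   iff   w(i) < w(j)  and  d <= x - c_{i,j}.
   Moreover, when w(i) < w(j), the inversions of w starting at i split as
   those ending strictly between i and j plus those ending after j, so
       c_i = c_{i,j} + #tail(i,j),   tail(i,j) = {k > j | w(k) < w(i)}.
   (=>) In a parallelogram, m_{j,c} < m_{i,b} forces w(i) < w(j) and
        c + c_{i,j} <= b <= c_i - 1, hence #tail(i,j) >= 2: two positions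
        j < k < l with w(k), w(l) < w(i) < w(j), i.e. a 3412 or a 3421.
   (<=) Conversely such a pattern gives #tail(i,j) >= 2, and the criterion
        shows that a = c_{i,j} + 2, b = c_{i,j} + 1, c = 1, d = 2 yield a
        parallelogram. *)

Section Parallelogram.
Variables (n : nat) (w : 'S_n).
Implicit Types (i j k l : 'I_n).

Lemma ltn_ord_neq i j : i <= j -> j != i -> i < j.
Proof. by move=> le_ij ne_ji; rewrite ltn_neqAle le_ij andbT eq_sym val_eqE. Qed.

Lemma perm_val_neq i j : i != j -> (w i : nat) != w j.
Proof. by apply: contraNneq => /val_inj /perm_inj ->. Qed.

Lemma mvec_before i k x : k < i -> mvec w i x k = 0.
Proof. by move=> lt_ki; rewrite ffunE lt_ki. Qed.

Lemma mvec_at i x : mvec w i x i = x.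
Proof. by rewrite ffunE ltnn eqxx. Qed.

Lemma mvec_after i k x : i < k ->
  mvec w i x k = if Defs.inv_pair w i k then 0 else x - cij w i k.
Proof. by move=> lt_ik; rewrite ffunE ltnNge (ltnW lt_ik) -val_eqE gtn_eqF. Qed.

Definition tail i j : {set 'I_n} := [set k : 'I_n | (j < k) && (w k < w i)].

Lemma c_tail j : c w j = #|tail j j|.
Proof. by []. Qed.

Lemma tail_subset i i' j : w i <= w i' -> tail i j \subset tail i' j.
Proof.
move=> le_wi; apply/subsetP => k; rewrite !inE => /andP[-> lt_wk].
exact: leq_trans lt_wk le_wi.
Qed.

Lemma c_split i j : i < j -> w i < w j -> c w i = cij w i j + #|tail i j|.
Proof.
move=> lt_ij lt_wij; rewrite /c /cij -(cardsID [set k : 'I_n | k < j]).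
congr (_ + _); apply: eq_card => k.
  by rewrite !inE -andbA (andbC (w k < w i)).
rewrite !inE -leqNgt; apply/andP/andP => [[le_jk /andP[_ lt_wk]]|[lt_jk lt_wk]].
  split=> //; apply: ltn_ord_neq => //; apply: contraTneq lt_wk => ->.
  by rewrite -leqNgt ltnW.
by rewrite ltnW // (ltn_trans lt_ij lt_jk).
Qed.

Lemma tail_pair i j : 1 < #|tail i j| ->
  exists k l, [/\ j < k, k < l, w k < w i & w l < w i].
Proof.
case/card_gt1P => k [l [+ + ne_kl]].
rewrite !inE => /andP[lt_jk lt_wk] /andP[lt_jl lt_wl].
case: (ltngtP k l) => [lt_kl|lt_lk|/val_inj eq_kl]; first by exists k, l.
  by exists l, k.
by rewrite eq_kl eqxx in ne_kl.
Qed.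

Lemma pair_tail i j k l : j < k -> k < l -> w k < w i -> w l < w i ->
  1 < #|tail i j|.
Proof.
move=> lt_jk lt_kl lt_wk lt_wl; apply/card_gt1P; exists k, l.
by rewrite !inE lt_jk lt_wk (ltn_trans lt_jk lt_kl) lt_wl -val_eqE ltn_eqF.
Qed.

(* Inversions of i before k are inversions of i before j or of j before k,
   as soon as w(i) < w(j). *)
Lemma cij_triangle i j k : i < j -> w i < w j ->
  cij w i k <= cij w i j + cij w j k.
Proof.
move=> lt_ij lt_wij; rewrite /cij.
set A := [set _ | _]; set B := [set _ | _]; set C := [set _ | _].
suff /subset_leq_card : A \subset B :|: C by rewrite cardsU; lia.
apply/subsetP => m; rewrite !inE => /and3P [lt_im lt_mk lt_wm].
case: (ltnP m j) => [_|le_jm]; first by rewrite lt_im lt_wm.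
rewrite lt_mk (ltn_trans lt_wm lt_wij) !andbT /= andbF /=; apply: ltn_ord_neq => //.
by apply: contraTneq lt_wm => ->; rewrite -leqNgt ltnW.
Qed.

Lemma mvec_le_suff i j d x : i < j -> w i < w j -> d <= x - cij w i j ->
  vle (mvec w j d) (mvec w i x).
Proof.
move=> lt_ij lt_wij le_d; apply/forallP => k.
case: (ltnP k j) => [lt_kj|le_jk]; first by rewrite mvec_before.
have [->|ne_kj] := eqVneq k j.
  by rewrite mvec_at mvec_after // /Defs.inv_pair lt_ij ltnNge (ltnW lt_wij).
have lt_jk : j < k by apply: ltn_ord_neq.
rewrite (mvec_after _ lt_jk) (mvec_after _ (ltn_trans lt_ij lt_jk)) /Defs.inv_pair.
rewrite lt_jk (ltn_trans lt_ij lt_jk) /=; case: ltnP => // le_wjk.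
rewrite ltnNge (ltnW (leq_trans lt_wij le_wjk)) /=.
have := cij_triangle k lt_ij lt_wij; lia.
Qed.

(* Conversely, the j-th coordinate alone forces both conditions. *)
Lemma mvec_le_nec i j d x : i < j -> 0 < d ->
  vle (mvec w j d) (mvec w i x) -> w i < w j /\ d <= x - cij w i j.
Proof.
move=> lt_ij d_gt0 /forallP /(_ j); rewrite mvec_at mvec_after // /Defs.inv_pair lt_ij /=.
case: ltnP => [_|le_wij le_d]; first by rewrite leqNgt d_gt0.
split=> //; rewrite ltn_neqAle le_wij andbT perm_val_neq // -val_eqE ltn_eqF //.
Qed.

Lemma mvec_neq i j d x : i < j -> 0 < x -> mvec w j d != mvec w i x.
Proof.
move=> lt_ij x_gt0; apply: contraTneq x_gt0 => /ffunP /(_ i).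
by rewrite mvec_before // mvec_at => <-.
Qed.

Lemma mvec_lt_suff i j d x : i < j -> w i < w j -> 0 < x -> d <= x - cij w i j ->
  vlt (mvec w j d) (mvec w i x).
Proof.
by move=> lt_ij lt_wij x_gt0 le_d; rewrite /vlt mvec_neq // mvec_le_suff.
Qed.

Lemma parallelogram_of_tail i j : i < j -> w i < w j -> 1 < #|tail i j| ->
  has_parallelogram w.
Proof.
move=> lt_ij lt_wij tail2.
have c_i := c_split lt_ij lt_wij.
have c_j : 1 < c w j.
  by rewrite c_tail; apply: leq_trans tail2 (subset_leq_card (tail_subset _ (ltnW lt_wij))).
exists i, j, (cij w i j + 2), (cij w i j + 1), 1, 2.
split=> //; [by rewrite c_i; lia | lia | split].
- by apply: mvec_lt_suff => //; lia.
- by apply: mvec_lt_suff => //; lia.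
apply/andP; split; apply/negP.
- by move=> /forallP /(_ i); rewrite mvec_at mvec_before // addn1.
- by move=> /(mvec_le_nec lt_ij) [] // _; lia.
Qed.

End Parallelogram.

Theorem mainTheorem8 (n : nat) (w : 'S_n) :
  has_parallelogram w <-> contains3412 w \/ contains3421 w.
Proof.
split.
- move=> [i [j [a [b [cc [d [lt_ij [_ [lt_ba le_a]] [cc_gt0 _] _ [_ lt_cb _]]]]]]]].
  have [lt_wij le_cc] := mvec_le_nec lt_ij cc_gt0 (proj2 (andP lt_cb)).
  have tail2 : 1 < #|tail w i j| by have := c_split lt_ij lt_wij; lia.
  have [k [l [lt_jk lt_kl lt_wk lt_wl]]] := tail_pair tail2.
  case: (ltngtP (w k) (w l)) => [lt_wkl|lt_wlk|eq_wkl].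
  + by left; exists i, j, k, l.
  + by right; exists i, j, k, l.
  + by move/val_inj/perm_inj: eq_wkl => eq_kl; rewrite eq_kl ltnn in lt_kl.
- case=> [] [i [j [k [l [lt_ij lt_jk lt_kl [lt_low lt_mid lt_wij]]]]]];
    apply: (parallelogram_of_tail lt_ij lt_wij); apply: (pair_tail lt_jk lt_kl) => //;
    exact: ltn_trans lt_low lt_mid.
Qed.
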